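(* Let $S=K[x_1,\dots,x_n]$ with $K$ an $F$-finite field of prime characteristic $p$, $I\subseteq S$ a squarefree monomial ideal, and $R=S/I$. If $\mathfrak q$ is a monomial prime ideal of $R$, then $\mathfrak q_e=\mathfrak q^{[p^e]}+\mathcal P(\mathfrak q)$ for every $e\in\mathbb N$.
   Context: A monomial ideal of $R$ is one generated by images of monomials. $\mathfrak q^{[p^e]}$ is the ideal generated by $p^e$-th powers of elements of $\mathfrak q$. $J_e=\{f\in R\mid \varphi(f^{1/p^e})\in J \text{ for all }\varphi\in\operatorname{Hom}_R(R^{1/p^e},R)\}$ and $\mathcal P(J)=\bigcap_{s\in\mathbb N}J_s$ (Cartier core). *)

From HB Require Import structures.
From mathcomp Require Import all_boot all_order all_algebra.
From mathcomp Require Import generic_quotient ring_quotient.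
Set Implicit Arguments. Unset Strict Implicit. Unset Printing Implicit Defensive.
Import GRing.Theory.
Local Open Scope ring_scope.

Fixpoint mpoly (K : fieldType) (n : nat) : comNzRingType :=
  match n with
  | 0 => K
  | m.+1 => {poly mpoly K m}
  end.

Fixpoint mvar (K : fieldType) (n : nat) (i : nat) : mpoly K n :=
  match n return mpoly K n with
  | 0 => 0
  | m.+1 => if i == m then ('X : {poly mpoly K m}) else (mvar K m i)%:P
  end.

Definition monomial (K : fieldType) (n : nat) (a : 'I_n -> nat) : mpoly K n :=
  \prod_(i < n) mvar K n i ^+ a i.

Definition sqfree_monomial (K : fieldType) (n : nat) (A : {set 'I_n}) : mpoly K n :=
  \prod_(i in A) mvar K n i.

Definition ideal_gen (R : comNzRingType) (G : R -> Prop) : R -> Prop :=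
  fun f => exists (k : nat) (r g : 'I_k -> R),
      (forall j, G (g j)) /\ f = \sum_(j < k) r j * g j.

Definition is_ideal (R : comNzRingType) (J : R -> Prop) : Prop :=
  [/\ J 0, (forall a b, J a -> J b -> J (a + b)) & (forall r a, J a -> J (r * a))].

Definition is_prime_ideal (R : comNzRingType) (J : R -> Prop) : Prop :=
  [/\ is_ideal J, ~ J 1 & (forall a b, J (a * b) -> J a \/ J b)].

Definition ideal_sum (R : comNzRingType) (A B : R -> Prop) : R -> Prop :=
  fun f => exists a b, [/\ A a, B b & f = a + b].

Definition ideal_eq (R : comNzRingType) (A B : R -> Prop) : Prop :=
  forall f, A f <-> B f.

Definition frob_pow (R : comNzRingType) (q : nat) (J : R -> Prop) : R -> Prop :=
  ideal_gen (fun f => exists g, J g /\ f = g ^+ q).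

Definition is_monomial_ideal (K : fieldType) (n : nat) (R : comNzRingType)
    (pi : mpoly K n -> R) (J : R -> Prop) : Prop :=
  ideal_eq J (ideal_gen (fun f => J f /\ exists a, f = pi (@monomial K n a))).

Definition is_sqfree_monomial_ideal (K : fieldType) (n : nat)
    (I : pred (mpoly K n)) : Prop :=
  exists T : {set {set 'I_n}},
    forall f, f \in I <-> ideal_gen (fun g => exists2 A, A \in T & g = @sqfree_monomial K n A) f.

(* K is F-finite: K is a finitely generated module over its subfield K^p. *)
Definition F_finite (K : fieldType) (p : nat) : Prop :=
  exists b : seq K, forall x : K,
    exists c : 'I_(size b) -> K, x = \sum_(i < size b) c i ^+ p * b`_i.

(* phi : R^{1/q} -> R is R-linear, where R^{1/q} = R with r . x = r^q x. *)
Definition frob_linear (R : comNzRingType) (q : nat) (phi : R -> R) : Prop :=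
  (forall x y, phi (x + y) = phi x + phi y) /\
  (forall r x, phi (r ^+ q * x) = r * phi x).

(* J_e = { f | phi(f^{1/p^e}) in J for all phi in Hom_R(R^{1/p^e}, R) }. *)
Definition J_e (R : comNzRingType) (p e : nat) (J : R -> Prop) : R -> Prop :=
  fun f => forall phi : R -> R, frob_linear (p ^ e) phi -> J (phi f).

Definition cartier_core (R : comNzRingType) (p : nat) (J : R -> Prop) : R -> Prop :=
  fun f => forall s : nat, J_e p s J f.

(* A monomial prime [q] of [R] is generated by variables; call the other
   variables free.  Split [f] along its monomials [x^a].  If [a_i >= p^e] for a
   variable [x_i] of [q], then [x^a] lies in [q^[p^e]].  If [x^a * x^tau = 0]
   in [R] for a face [tau] of the Stanley-Reisner complex containing the free
   variables, then [x^a] lies in the Cartier core: [y * x^tau = 0] forces [y]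
   into [q], and [phi (x^a) * x^tau = phi (x^(p^e tau) * x^a) = 0].  Every
   other monomial has coefficient zero in an [f] of [q_e]: F-finiteness of [K]
   yields a nonzero [K^(p^e)]-linear functional [l], and [l] composed with the
   trace of [S] over [S^(p^e)], twisted by a suitable monomial, is an element
   of [Hom_R(R^(1/p^e), R)] whose value on [f] would have a monomial supported
   on the free variables, which [q] cannot contain.  The other inclusion is
   formal. *)

From HB Require Import structures.
From mathcomp Require Import all_boot all_order all_algebra.
From mathcomp Require Import generic_quotient ring_quotient.
From mathcomp Require Import ring zify.
From Stdlib Require Import Classical ClassicalEpsilon FunctionalExtensionality.
Set Implicit Arguments. Unset Strict Implicit. Unset Printing Implicit Defensive.
Import GRing.Theory.
Local Open Scope ring_scope.

Section FrobeniusFunctional.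
Variables (K : fieldType) (p : nat).
Hypothesis pK : p \in [pchar K].

Lemma exprB_pchar (x y : K) : (x - y) ^+ p = x ^+ p - y ^+ p.
Proof. by rewrite -!(pFrobenius_autE pK) rmorphB. Qed.

Lemma exprD_pchar (x y : K) : (x + y) ^+ p = x ^+ p + y ^+ p.
Proof. by rewrite -!(pFrobenius_autE pK) rmorphD. Qed.

(* [frob_span b x] : [x] is a [K^p]-linear combination of the entries of [b]. *)
Fixpoint frob_span (b : seq K) (x : K) : Prop :=
  if b is y :: c then exists d, frob_span c (x - d ^+ p * y) else x = 0.

Lemma frob_span0 b : frob_span b 0.
Proof.
elim: b => [|y b IH] //=; exists 0.
by rewrite expr0n eqn0Ngt prime_gt0 ?(pcharf_prime pK) //= mul0r subr0.
Qed.

Lemma frob_spanB b x x' : frob_span b x -> frob_span b x' -> frob_span b (x - x').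
Proof.
elim: b x x' => [|y b IH] x x' /=; first by move=> -> ->; rewrite subr0.
move=> [d Hd] [d' Hd']; exists (d - d'); rewrite exprB_pchar.
have -> : x - x' - (d ^+ p - d' ^+ p) * y = (x - d ^+ p * y) - (x' - d' ^+ p * y).
  by ring.
exact: IH.
Qed.

Lemma frob_spanZ b x t : frob_span b x -> frob_span b (t ^+ p * x).
Proof.
elim: b x => [|y b IH] x /=; first by move=> ->; rewrite mulr0.
move=> [d Hd]; exists (t * d); rewrite exprMn.
have -> : t ^+ p * x - t ^+ p * d ^+ p * y = t ^+ p * (x - d ^+ p * y) by ring.
exact: IH.
Qed.

Lemma frob_span_sum b (c : 'I_(size b) -> K) :
  frob_span b (\sum_(i < size b) c i ^+ p * b`_i).
Proof.
elim: b c => [|y b IH] c /=; first by rewrite big_ord0.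
exists (c ord0); rewrite big_ord_recl /= (addrC (c ord0 ^+ p * y)) addrK.
exact: (IH (fun i => c (lift ord0 i))).
Qed.

Lemma exists_falling_edge (P : nat -> Prop) m :
  P 0%N -> ~ P m -> exists j, [/\ (j < m)%N, P j & ~ P j.+1].
Proof.
elim: m => [|m IH] P0 Pm //.
have [Hm|/(IH P0) [j [lt Pj Pj1]]] := classic (P m); first by exists m.
by exists j; split => //; exact: ltnW.
Qed.

(* The [K^p]-coordinate along [y] in [K = W (+) K^p y]. *)
Lemma frob_functional_of_complement (c : seq K) (y : K) :
  (forall x, exists d, frob_span c (x - d ^+ p * y)) -> ~ frob_span c y ->
  exists2 l : K -> K, frob_linear p l & l y = 1.
Proof.
set W := frob_span c => Hex Wy.
have coord_uniq x d d' : W (x - d ^+ p * y) -> W (x - d' ^+ p * y) -> d = d'.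
  move=> H1 H2; have [//|neq] := eqVneq d d'; exfalso; apply: Wy.
  have nz : d' - d != 0 by rewrite subr_eq0 eq_sym.
  have := frob_spanZ ((d' - d)^-1) (frob_spanB H1 H2).
  have -> : x - d ^+ p * y - (x - d' ^+ p * y) = (d' - d) ^+ p * y.
    by rewrite exprB_pchar; ring.
  by rewrite mulrA -exprMn mulVf ?expr1n ?mul1r.
pose l x := proj1_sig (constructive_indefinite_description _ (Hex x)).
have lP x : W (x - l x ^+ p * y).
  by rewrite /l; case: constructive_indefinite_description.
exists l; last first.
  by apply: (coord_uniq y) (lP _) _; rewrite expr1n mul1r subrr; exact: frob_span0.
split => [x x'|t x].
  apply: (coord_uniq (x + x')) (lP _) _; rewrite exprD_pchar.
  have -> : x + x' - (l x ^+ p + l x' ^+ p) * y =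
            (x - l x ^+ p * y) - (0 - (x' - l x' ^+ p * y)) by ring.
  exact: frob_spanB (lP _) (frob_spanB (frob_span0 _) (lP _)).
apply: (coord_uniq (t ^+ p * x)) (lP _) _; rewrite exprMn.
have -> : t ^+ p * x - t ^+ p * l x ^+ p * y = t ^+ p * (x - l x ^+ p * y) by ring.
exact: frob_spanZ (lP _).
Qed.

(* Drop the vectors of a spanning family of [K] over [K^p] one at a time; the
   last one before the span shrinks is complemented by the span of the rest. *)
Lemma exists_frob_functional : F_finite K p ->
  exists2 l : K -> K, frob_linear p l & exists t, l t = 1.
Proof.
move=> [b Hb].
have spanK : forall x, frob_span (drop 0 b) x.
  by move=> x; rewrite drop0; have [c ->] := Hb x; exact: frob_span_sum.
have span0_nK : ~ forall x, frob_span (drop (size b) b) x.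
  by rewrite drop_size /= => /(_ 1) /eqP; rewrite oner_eq0.
have [j [lt Pj WnK]] :=
  @exists_falling_edge (fun j => forall x, frob_span (drop j b) x) _ spanK span0_nK.
rewrite (drop_nth 0 lt) in Pj.
have Wy : ~ frob_span (drop j.+1 b) b`_j.
  move=> Wy; apply: WnK => x; have [d Hd] := Pj x.
  have := frob_spanB Hd (frob_spanB (frob_span0 _) (frob_spanZ d Wy)).
  by rewrite sub0r opprK subrK.
have [l l_lin ly] := frob_functional_of_complement Pj Wy.
by exists l => //; exists b`_j.
Qed.

End FrobeniusFunctional.

Lemma exists_frobX_functional (K : fieldType) (p e : nat) :
  p \in [pchar K] -> F_finite K p ->
  exists2 l : K -> K, frob_linear (p ^ e) l & exists t, l t = 1.
Proof.
move=> pK /(exists_frob_functional pK) [l [lD lS] [y ly]].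
elim: e => [|e [lQ [QD QS] [t Qt]]].
  by exists id; [split=> // c x; rewrite expn0 expr1 | exists 1].
exists (lQ \o l); first by split=> [x x'|c x] /=; rewrite ?lD ?QD // expnSr exprM lS QS.
by exists (t ^+ p * y); rewrite /= lS ly mulr1.
Qed.

Section Coefficients.
Variable K : fieldType.

(* An exponent of [mpoly K m.+1] splits into the exponent of its coefficient
   in [mpoly K m] and the degree in the last variable [x_m]. *)
Definition exp_init m (a : 'I_m.+1 -> nat) : 'I_m -> nat :=
  fun j => a (widen_ord (leqnSn m) j).
Definition exp_snoc m (a : 'I_m -> nat) (k : nat) : 'I_m.+1 -> nat :=
  fun i => if unlift ord_max i is Some j then a j else k.

Lemma widen_ord_max_lift m (j : 'I_m) : widen_ord (leqnSn m) j = lift ord_max j.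
Proof. by apply: val_inj; rewrite /= /bump leqNgt ltn_ord. Qed.

Lemma exp_init_snoc m (a : 'I_m -> nat) k : exp_init (exp_snoc a k) = a.
Proof.
apply: functional_extensionality => j.
by rewrite /exp_init /exp_snoc widen_ord_max_lift liftK.
Qed.

Lemma exp_snoc_max m (a : 'I_m -> nat) k : exp_snoc a k ord_max = k.
Proof. by rewrite /exp_snoc unlift_none. Qed.

Lemma exp_snoc_init m (a : 'I_m.+1 -> nat) : exp_snoc (exp_init a) (a ord_max) = a.
Proof.
apply: functional_extensionality => i; rewrite /exp_snoc.
by case: unliftP => [j ->|-> //]; rewrite /exp_init widen_ord_max_lift.
Qed.

Fixpoint mcoef n : mpoly K n -> ('I_n -> nat) -> K :=
  match n return mpoly K n -> ('I_n -> nat) -> K with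
  | 0 => fun F _ => F
  | m.+1 => fun (F : {poly mpoly K m}) a => mcoef F`_(a ord_max) (exp_init a)
  end.

Fixpoint mconst n : K -> mpoly K n :=
  match n return K -> mpoly K n with
  | 0 => fun c => c
  | m.+1 => fun c => ((mconst m c)%:P : {poly mpoly K m})
  end.

Lemma mcoef_inj n (F G : mpoly K n) : (forall a, mcoef F a = mcoef G a) -> F = G.
Proof.
elim: n F G => [|n IH] F G H; first exact: (H (fun _ => 0%N)).
apply/polyP => k; apply: IH => a'.
by have := H (exp_snoc a' k); rewrite /= exp_snoc_max exp_init_snoc.
Qed.

Lemma mcoef0 n a : mcoef (0 : mpoly K n) a = 0.
Proof. by elim: n a => [|n IH] a //=; rewrite coef0 IH. Qed.

Lemma mcoefD n (F G : mpoly K n) a : mcoef (F + G) a = mcoef F a + mcoef G a.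
Proof. by elim: n F G a => [|n IH] F G a //=; rewrite coefD IH. Qed.

Lemma mcoef_sum n I (r : seq I) (P : pred I) (F : I -> mpoly K n) a :
  mcoef (\sum_(i <- r | P i) F i) a = \sum_(i <- r | P i) mcoef (F i) a.
Proof. by elim/big_rec2: _ => [|i x y _ <-]; [exact: mcoef0 | exact: mcoefD]. Qed.

Lemma mcoef_constM n c (F : mpoly K n) a : mcoef (mconst n c * F) a = c * mcoef F a.
Proof. by elim: n F a => [|n IH] F a //=; rewrite coefCM IH. Qed.

Lemma monomial_snoc m (a : 'I_m.+1 -> nat) :
  monomial K a = ((monomial K (exp_init a))%:P * 'X^(a ord_max) : {poly mpoly K m}).
Proof.
rewrite /monomial big_ord_recr /= eqxx; congr (_ * _).
by rewrite rmorph_prod; apply: eq_bigr => j _; rewrite /exp_init rmorphXn /= ltn_eqF.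
Qed.

Lemma forall_ordS m (P : 'I_m.+1 -> bool) :
  [forall i, P i] = P ord_max && [forall j : 'I_m, P (widen_ord (leqnSn m) j)].
Proof.
apply/forallP/andP => [H|[H1 /forallP H2] i]; first by split => //; apply/forallP.
by case: (unliftP ord_max i) => [j ->|-> //]; rewrite -widen_ord_max_lift.
Qed.

Definition exp_le n (c a : 'I_n -> nat) : bool := [forall i, (c i <= a i)%N].

Lemma mcoefM_monomial n (F : mpoly K n) c a :
  mcoef (F * monomial K c) a =
  if exp_le c a then mcoef F (fun i => a i - c i)%N else 0.
Proof.
elim: n F c a => [|n IH] F c a.
  by rewrite /= /monomial big_ord0 mulr1 /exp_le; case: forallP => // [[]] [].
rewrite monomial_snoc /= mulrA coefMXn /exp_le forall_ordS.
rewrite -/(exp_le (exp_init c) (exp_init a)).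
by case: leqP => H /=; rewrite ?coefMC ?IH ?mcoef0.
Qed.

Fixpoint mrestr n : (('I_n -> nat) -> bool) -> mpoly K n -> mpoly K n :=
  match n return (('I_n -> nat) -> bool) -> mpoly K n -> mpoly K n with
  | 0 => fun P F => if P (fun _ => 0%N) then F else 0
  | m.+1 => fun P (F : {poly mpoly K m}) =>
      (\poly_(k < size F) mrestr (fun a' => P (exp_snoc a' k)) F`_k : {poly mpoly K m})
  end.

Lemma mcoef_mrestr n P (F : mpoly K n) a :
  mcoef (mrestr P F) a = if P a then mcoef F a else 0.
Proof.
elim: n P F a => [|n IH] P F a.
  have -> : a = (fun _ => 0%N) by apply: functional_extensionality => -[].
  by rewrite /=; case: ifP.
rewrite /= coef_poly; case: ltnP => H; first by rewrite IH exp_snoc_init.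
by rewrite mcoef0 nth_default // mcoef0; case: ifP.
Qed.

Lemma mrestr_ind n (Q : mpoly K n -> Prop) (P : ('I_n -> nat) -> bool) (F : mpoly K n) :
  Q 0 -> (forall x y, Q x -> Q y -> Q (x + y)) ->
  (forall a c, P a -> Q (mconst n c * monomial K a)) -> Q (mrestr P F).
Proof.
elim: n Q P F => [|n IH] Q P F Q0 QD QM.
  rewrite /=; case: ifP => // HP.
  by have := QM (fun _ => 0%N) F HP; rewrite /= /monomial big_ord0 mulr1.
rewrite /= poly_def; elim/big_ind: _ => // k _.
apply: (IH (fun G => Q (G *: 'X^k))); first by rewrite scale0r.
  by move=> x y Hx Hy; rewrite scalerDl; exact: QD.
move=> a c HP; have := QM (exp_snoc a k) c HP.
by rewrite monomial_snoc exp_init_snoc exp_snoc_max /= mulrA -polyCM mul_polyC.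
Qed.

Lemma mrestrC n (P : ('I_n -> nat) -> bool) (F : mpoly K n) :
  F = mrestr P F + mrestr (fun a => ~~ P a) F.
Proof.
apply: mcoef_inj => a; rewrite mcoefD !mcoef_mrestr.
by case: (P a); rewrite /= ?addr0 ?add0r.
Qed.

Lemma eq_monomial n (a b : 'I_n -> nat) : a =1 b -> monomial K a = monomial K b.
Proof. by move=> H; congr monomial; apply: functional_extensionality. Qed.

Lemma monomialD n (a b : 'I_n -> nat) :
  monomial K (fun i => a i + b i)%N = monomial K a * monomial K b.
Proof. by rewrite /monomial -big_split /=; apply: eq_bigr => i _; rewrite exprD. Qed.

Lemma monomialX n (a : 'I_n -> nat) (q : nat) :
  monomial K (fun i => q * a i)%N = monomial K a ^+ q.
Proof. by rewrite /monomial -prodrXl; apply: eq_bigr => i _; rewrite -exprM mulnC. Qed.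

Definition set_exp n (A : {set 'I_n}) : 'I_n -> nat := fun i => (i \in A : nat).
Definition unit_exp n (j : 'I_n) : 'I_n -> nat := fun i => (i == j : nat).

Lemma sqfree_monomialE n (A : {set 'I_n}) :
  sqfree_monomial K A = monomial K (set_exp A).
Proof.
rewrite /sqfree_monomial /monomial big_mkcond /=; apply: eq_bigr => i _.
by rewrite /set_exp; case: (i \in A); rewrite ?expr1 ?expr0.
Qed.

Lemma mvarE n (j : 'I_n) : mvar K n j = monomial K (unit_exp j).
Proof.
rewrite /monomial (bigD1 j) //= /unit_exp eqxx expr1 big1 ?mulr1 // => i /negbTE ->.
by rewrite expr0.
Qed.

End Coefficients.

Lemma pchar_mpoly (K : fieldType) p n : p \in [pchar K] -> p \in [pchar mpoly K n].
Proof. by move=> pK; elim: n => [|n IH] //=; rewrite pchar_poly. Qed.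

Lemma exprDn_pcharX (R : comNzRingType) p e (x y : R) : p \in [pchar R] ->
  (x + y) ^+ (p ^ e) = x ^+ (p ^ e) + y ^+ (p ^ e).
Proof.
move=> pR; apply: exprDn_pchar; rewrite pnatX (eq_pnat _ (pcharf_eq pR)).
by rewrite pnat_id ?(pcharf_prime pR).
Qed.

Lemma frob_linear0 (R : comNzRingType) q (phi : R -> R) :
  frob_linear q phi -> phi 0 = 0.
Proof. by move=> [phiD _]; apply: (addrI (phi 0)); rewrite -phiD !addr0. Qed.

Section FrobeniusTrace.
Variables (K : fieldType) (p e : nat) (l : K -> K).
Hypotheses (pK : p \in [pchar K]) (l_lin : frob_linear (p ^ e) l).
Local Notation Q := (p ^ e)%N.

Lemma expn_pchar_gt0 : (0 < Q)%N.
Proof. by rewrite expn_gt0 prime_gt0 ?(pcharf_prime pK). Qed.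

(* [S] is free over [S^Q] with basis the monomials of exponents [< Q]; [mtrace]
   reads off the coordinate on [x^(Q-1, ..., Q-1)] and applies [l] to it. *)
Fixpoint mtrace n : mpoly K n -> mpoly K n :=
  match n return mpoly K n -> mpoly K n with
  | 0 => l
  | m.+1 => fun (F : {poly mpoly K m}) =>
      (\poly_(k < size F) mtrace F`_(Q * k + (Q - 1)) : {poly mpoly K m})
  end.

Lemma mtrace0 n : mtrace (0 : mpoly K n) = 0.
Proof.
elim: n => [|n IH] /=; first exact: frob_linear0 l_lin.
by apply/polyP => k; rewrite coef_poly !coef0 IH; case: ifP.
Qed.

Lemma coef_mtrace m (F : {poly mpoly K m}) k :
  (mtrace (F : mpoly K m.+1) : {poly mpoly K m})`_k = mtrace F`_(Q * k + (Q - 1)).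
Proof.
rewrite /= coef_poly; case: ltnP => // H.
rewrite nth_default ?mtrace0 //.
exact: leq_trans H (leq_trans (leq_pmull k expn_pchar_gt0) (leq_addr _ _)).
Qed.

Lemma mcoef_mtrace n (F : mpoly K n) r :
  mcoef (mtrace F) r = l (mcoef F (fun i => Q * r i + (Q - 1))%N).
Proof.
elim: n F r => [|n IH] F r //.
by rewrite /= -/(mtrace (F : mpoly K n.+1)) coef_mtrace IH.
Qed.

Lemma mtraceD n (F G : mpoly K n) : mtrace (F + G) = mtrace F + mtrace G.
Proof. by apply: mcoef_inj => a; rewrite mcoefD !mcoef_mtrace mcoefD (proj1 l_lin). Qed.

Lemma mtraceB n (F G : mpoly K n) : mtrace (F - G) = mtrace F - mtrace G.
Proof. by apply/eqP; rewrite eq_sym subr_eq -mtraceD subrK. Qed.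

Lemma mtrace_sum n I (r : seq I) (P : pred I) (F : I -> mpoly K n) :
  mtrace (\sum_(i <- r | P i) F i) = \sum_(i <- r | P i) mtrace (F i).
Proof. by elim/big_rec2: _ => [|i x y _ <-]; [exact: mtrace0 | exact: mtraceD]. Qed.

Lemma mtrace_frobM n (G F : mpoly K n) : mtrace (G ^+ Q * F) = G * mtrace F.
Proof.
elim: n G F => [|n IH] G F; first exact: (proj2 l_lin).
have pS : p \in [pchar mpoly K n.+1] by exact: pchar_mpoly.
elim/poly_ind: G F => [|G c IHG] F.
  by rewrite expr0n eqn0Ngt expn_pchar_gt0 !mul0r; exact: (mtrace0 n.+1).
rewrite exprDn_pcharX // mulrDl mtraceD exprMn -mulrA IHG -polyC_exp.
have -> : @mtrace n.+1 ((c ^+ Q)%:P * F) = (c%:P : {poly mpoly K n}) * mtrace F.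
  apply/polyP => k; rewrite -/(mtrace (_ : mpoly K n.+1)) coef_mtrace coefCM IH.
  by rewrite coefCM coef_mtrace.
have -> : @mtrace n.+1 ('X ^+ Q * F) = ('X : {poly mpoly K n}) * mtrace F.
  apply/polyP => k; rewrite -/(mtrace (_ : mpoly K n.+1)) coef_mtrace coefXnM coefXM.
  case: k => [|k].
    have -> : (Q * 0 + (Q - 1) < Q)%N by have := expn_pchar_gt0; lia.
    by rewrite eqxx; exact: mtrace0.
  have H1 : (Q <= Q * k.+1 + (Q - 1))%N by rewrite mulnS -addnA leq_addr.
  by rewrite ltnNge H1 /= coef_mtrace mulnS -addnA addKn.
by rewrite mulrDl mulrA.
Qed.

End FrobeniusTrace.

Section IdealClosure.
Variables (R : comNzRingType) (J : R -> Prop) (p : nat).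
Hypothesis J_ideal : is_ideal J.

Lemma ideal_gen0 (G : R -> Prop) : ideal_gen G 0.
Proof. by exists 0%N, (fun _ => 0), (fun _ => 0); split; [case|rewrite big_ord0]. Qed.

Lemma ideal_genD (G : R -> Prop) x y :
  ideal_gen G x -> ideal_gen G y -> ideal_gen G (x + y).
Proof.
move=> [k [r [g [Hg ->]]]] [k' [r' [g' [Hg' ->]]]].
exists (k + k')%N, (fun j => match split j with inl a => r a | inr b => r' b end),
  (fun j => match split j with inl a => g a | inr b => g' b end); split.
  by move=> j; case: split.
rewrite big_split_ord /=; congr (_ + _); apply: eq_bigr => j _.
  by rewrite -[lshift _ _]/(unsplit (inl _ j)) unsplitK.
by rewrite -[rshift _ _]/(unsplit (inr _ j)) unsplitK.
Qed.

Lemma ideal_gen_mulr (G : R -> Prop) r x : G x -> ideal_gen G (r * x).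
Proof.
by move=> Gx; exists 1%N, (fun _ => r), (fun _ => x); split; rewrite ?big_ord1.
Qed.

Lemma J_e0 s : J_e p s J 0.
Proof. by move=> phi /frob_linear0 ->; case: J_ideal. Qed.

Lemma J_eD s x y : J_e p s J x -> J_e p s J y -> J_e p s J (x + y).
Proof.
move=> Jx Jy phi phi_lin; rewrite (proj1 phi_lin).
by case: J_ideal => _ JD _; apply: JD; [apply: Jx | apply: Jy].
Qed.

Lemma J_eM s r x : J_e p s J x -> J_e p s J (r * x).
Proof.
move=> Jx phi [phiD phiS]; apply: (Jx (fun z => phi (r * z))).
by split=> [u v|c u]; rewrite ?mulrDr ?phiD // mulrCA phiS.
Qed.

Lemma cartier_core0 : cartier_core p J 0.
Proof. by move=> s; apply: J_e0. Qed.

Lemma cartier_coreD x y :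
  cartier_core p J x -> cartier_core p J y -> cartier_core p J (x + y).
Proof. by move=> Jx Jy s; apply: J_eD. Qed.

Lemma cartier_coreM r x : cartier_core p J x -> cartier_core p J (r * x).
Proof. by move=> Jx s; apply: J_eM. Qed.

Lemma frob_pow_sub_J_e s x : frob_pow (p ^ s) J x -> J_e p s J x.
Proof.
move=> [k [r [g [Hg ->]]]]; apply: (big_ind (J_e p s J)) => [||j _].
- exact: J_e0.
- exact: J_eD.
have [h [Jh ->]] := Hg j; move=> phi [_ phiS]; rewrite mulrC phiS mulrC.
by case: J_ideal => _ _; apply.
Qed.

Lemma ideal_sum_sub_J_e s x :
  ideal_sum (frob_pow (p ^ s) J) (cartier_core p J) x -> J_e p s J x.
Proof.
by move=> [a [b [Ja Jb ->]]]; apply: J_eD; [exact: frob_pow_sub_J_e | exact: Jb].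
Qed.

(* [m * phi x = phi (m^q * x) = phi (m^(q-1) * (x * m)) = phi 0 = 0]. *)
Lemma cartier_core_annihilator (m x : R) : prime p ->
  (forall y, y * m = 0 -> J y) -> x * m = 0 -> cartier_core p J x.
Proof.
move=> p_pr Jann xm0 s phi [phiD phiS]; apply: Jann.
have Q0 : (0 < p ^ s)%N by rewrite expn_gt0 prime_gt0.
rewrite mulrC -phiS -(prednK Q0) exprSr -mulrA (mulrC m x) xm0 mulr0.
exact: frob_linear0 (conj phiD phiS).
Qed.

End IdealClosure.

Lemma prime_ideal_exprn_notin (R : comNzRingType) (J : R -> Prop) a k :
  is_prime_ideal J -> ~ J a -> ~ J (a ^+ k).
Proof.
move=> [_ J1 JP] Ja; elim: k => [|k IH]; first by rewrite expr0.
by rewrite exprS => /JP [].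
Qed.

Definition asbool (P : Prop) : bool :=
  if excluded_middle_informative P then true else false.

Lemma asboolP (P : Prop) : reflect P (asbool P).
Proof. by rewrite /asbool; case: excluded_middle_informative => H; constructor. Qed.

Section StanleyReisner.
Variables (K : fieldType) (n : nat) (I : idealr (mpoly K n)) (T : {set {set 'I_n}}).
Local Notation S := (mpoly K n).
Local Notation R := {ideal_quot I}.
Local Notation pi := (\pi_R)%qT.
Hypothesis I_gen : forall f, f \in (I : pred S) <->
  ideal_gen (fun g => exists2 A, A \in T & g = @sqfree_monomial K n A) f.

Lemma piE (x y : S) : pi x = pi y <-> x - y \in (I : pred S).
Proof. by rewrite Quotient.idealrBE; split => [/eqP|/eqP]. Qed.

Lemma pi_eq0 (x : S) : pi x = 0 <-> x \in (I : pred S).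
Proof. by rewrite -(rmorph0 pi) piE subr0. Qed.

Lemma sqfree_monomial_in_I A : A \in T -> sqfree_monomial K A \in (I : pred S).
Proof.
move=> AT; apply/I_gen; exists 1%N, (fun _ => 1), (fun _ => sqfree_monomial K A).
by split; [move=> _; exists A | rewrite big_ord1 mul1r].
Qed.

Definition face (s : {set 'I_n}) : bool := [forall G in T, ~~ (G \subset s)].
Definition supp (a : 'I_n -> nat) : {set 'I_n} := [set i | a i != 0%N].

Lemma face_subset (s t : {set 'I_n}) : s \subset t -> face t -> face s.
Proof.
move=> st /forallP Ht; apply/forallP => G; apply/implyP => GT.
by apply: contra (implyP (Ht G) GT) => /subset_trans; apply.
Qed.

Lemma supp_set_expD (s : {set 'I_n}) a :
  supp (fun i => set_exp s i + a i)%N = s :|: supp a.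
Proof. by apply/setP => i; rewrite !inE /set_exp; case: (i \in s). Qed.

Lemma mcoef_I_face H c : H \in (I : pred S) -> face (supp c) -> mcoef H c = 0.
Proof.
move=> /I_gen [k [r [g [Hg ->]]]] /forallP Hf; rewrite mcoef_sum big1 // => j _.
have [A AT ->] := Hg j; rewrite sqfree_monomialE mcoefM_monomial.
case: ifP => // /forallP Hle; move/implyP: (Hf A) => /(_ AT) /negP; case.
by apply/subsetP => i iA; rewrite inE -lt0n; have := Hle i; rewrite /set_exp iA.
Qed.

Lemma monomial_nonface_in_I a : ~~ face (supp a) -> monomial K a \in (I : pred S).
Proof.
move=> /forallPn [G]; rewrite negb_imply negbK => /andP [GT Gsub].
have -> : monomial K a =
    monomial K (set_exp G) * monomial K (fun i => a i - set_exp G i)%N.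
  rewrite -monomialD; apply: eq_monomial => i; rewrite /set_exp.
  case: (boolP (i \in G)) => iG /=; last by rewrite subn0.
  by rewrite subnKC // lt0n; have := subsetP Gsub i iG; rewrite inE.
rewrite mulrC; apply: idealMr.
by rewrite -sqfree_monomialE; exact: sqfree_monomial_in_I.
Qed.

Variable q : R -> Prop.
Hypotheses (q_prime : is_prime_ideal q)
  (q_monomial : is_monomial_ideal (fun f : S => pi f) q).

Lemma q_ideal : is_ideal q. Proof. by case: q_prime. Qed.
Lemma q0 : q 0. Proof. by case: q_ideal. Qed.
Lemma qD a b : q a -> q b -> q (a + b). Proof. by case: q_ideal => _ H _; exact: H. Qed.
Lemma qM r a : q a -> q (r * a). Proof. by case: q_ideal => _ _ H; exact: H. Qed.

Definition outside_q : {set 'I_n} := [set i : 'I_n | asbool (~ q (pi (mvar K n i)))].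

Lemma outside_qP (i : 'I_n) : reflect (~ q (pi (mvar K n i))) (i \in outside_q).
Proof. by rewrite inE; apply: asboolP. Qed.

Lemma pi_monomial (b : 'I_n -> nat) :
  pi (monomial K b) = \prod_(i < n) pi (mvar K n i) ^+ b i.
Proof. by rewrite /monomial rmorph_prod; apply: eq_bigr => i _; rewrite rmorphXn. Qed.

Lemma monomial_notin_q (b : 'I_n -> nat) :
  supp b \subset outside_q -> ~ q (pi (monomial K b)).
Proof.
move=> /subsetP bB; rewrite pi_monomial; elim/big_rec: _ => [|i x _ Hx].
  by case: q_prime.
case: q_prime => _ _ /[apply] -[|//]; case: (eqVneq (b i) 0%N) => [->|bi].
  by rewrite expr0; case: q_prime.
by apply: prime_ideal_exprn_notin => //; apply/outside_qP/bB; rewrite inE.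
Qed.

Lemma monomial_in_q (b : 'I_n -> nat) (i : 'I_n) :
  i \notin outside_q -> b i != 0%N -> q (pi (monomial K b)).
Proof.
move=> /outside_qP iB bi.
have -> : monomial K b =
    monomial K (unit_exp i) * monomial K (fun j => b j - unit_exp i j)%N.
  rewrite -monomialD; apply: eq_monomial => j; rewrite /unit_exp.
  by case: eqP => [->|] /=; [rewrite subnKC // lt0n | rewrite subn0].
by rewrite rmorphM mulrC; apply: qM; rewrite -mvarE; apply: NNPP.
Qed.

Lemma face_outside_q : face outside_q.
Proof.
apply/forallP => G; apply/implyP => GT; apply/negP => GB.
have := sqfree_monomial_in_I GT; rewrite -pi_eq0 sqfree_monomialE => H.
apply: (@monomial_notin_q (set_exp G)); last by rewrite H; exact: q0.
by apply: subset_trans GB; apply/subsetP => i; rewrite inE /set_exp; case: (i \in G).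
Qed.

(* Modulo [I], [h] is a combination of monomials of [q], none of which divides
   a monomial supported in the face [outside_q]; and no element of [I] has a
   monomial supported on a face. *)
Lemma mcoef_q h r : q (pi h) -> supp r \subset outside_q -> mcoef h r = 0.
Proof.
move=> /q_monomial [k [rr [g [Hg Hh]]]] rB.
pose b j := proj1_sig (constructive_indefinite_description _ (proj2 (Hg j))).
have gb j : g j = pi (monomial K (b j)).
  by rewrite /b; case: constructive_indefinite_description.
pose H' := \sum_(j < k) repr (rr j) * monomial K (b j).
have piH : pi h = pi H'.
  rewrite Hh rmorph_sum; apply: eq_bigr => j _.
  by rewrite rmorphM gb; congr (_ * _); exact/esym/reprK.
rewrite -(subrK H' h) mcoefD (@mcoef_I_face _ r); first last.
- exact: face_subset face_outside_q.
- exact/piE.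
rewrite add0r mcoef_sum big1 // => j _; rewrite mcoefM_monomial.
case: ifP => // /forallP Hle; exfalso; move: (proj1 (Hg j)); rewrite gb.
apply: monomial_notin_q; apply: subset_trans rB; apply/subsetP => i.
by rewrite !inE -!lt0n => /leq_trans; apply.
Qed.

(* Multiplying by [x^tau] keeps a monomial supported in the face [tau] outside
   [I], so those monomials of [y] vanish; the remaining ones lie in [q]. *)
Lemma q_of_annihilator (tau : {set 'I_n}) y : face tau -> outside_q \subset tau ->
  y * pi (monomial K (set_exp tau)) = 0 -> q y.
Proof.
move=> ftau Btau; rewrite -[y]reprK -rmorphM pi_eq0; set h := repr y => hI.
rewrite (mrestrC (fun a => supp a \subset tau) h) rmorphD.
have -> : mrestr (fun a => supp a \subset tau) h = 0.
  apply: mcoef_inj => a; rewrite mcoef_mrestr mcoef0; case: ifP => // sa.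
  have := @mcoef_I_face _ (fun i => set_exp tau i + a i)%N hI.
  rewrite mcoefM_monomial.
  have -> : exp_le (set_exp tau) (fun i => set_exp tau i + a i)%N.
    by apply/forallP => i; rewrite leq_addr.
  have -> : (fun i => set_exp tau i + a i - set_exp tau i)%N = a.
    by apply: functional_extensionality => i; rewrite addKn.
  by apply; rewrite supp_set_expD (setUidPl sa).
rewrite rmorph0 add0r; apply: (@mrestr_ind _ _ (fun G => q (pi G))).
- by rewrite rmorph0; exact: q0.
- by move=> x z Hx Hz; rewrite rmorphD; exact: qD.
move=> a c /subsetPn [i]; rewrite inE => ai itau.
rewrite rmorphM; apply: qM; apply: (monomial_in_q (i := i)) => //.
by apply: contra itau; apply: (subsetP Btau).
Qed.

Definition cartier_class (a : 'I_n -> nat) : bool :=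
  [exists tau, [&& face tau, outside_q \subset tau & ~~ face (supp a :|: tau)]].

Definition frob_class (Q : nat) (a : 'I_n -> nat) : bool :=
  [exists i, (i \notin outside_q) && (Q <= a i)%N].

Lemma cartier_class_cartier_core p a c : prime p -> cartier_class a ->
  cartier_core p q (pi (mconst n c * monomial K a)).
Proof.
move=> p_pr /existsP [tau /and3P [ft Bt nf]]; rewrite rmorphM; apply: cartier_coreM.
apply: (cartier_core_annihilator (m := pi (monomial K (set_exp tau)))) => //.
  by move=> y; apply: q_of_annihilator.
rewrite mulrC -rmorphM -monomialD; apply/pi_eq0/monomial_nonface_in_I.
by rewrite supp_set_expD setUC.
Qed.

Lemma frob_class_frob_pow Q a c : frob_class Q a ->
  frob_pow Q q (pi (mconst n c * monomial K a)).
Proof.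
move=> /existsP [i /andP [iB Qa]].
have -> : monomial K a =
    mvar K n i ^+ Q * monomial K (fun j => a j - Q * unit_exp i j)%N.
  rewrite mvarE -monomialX -monomialD; apply: eq_monomial => j; rewrite /unit_exp.
  by case: eqP => [->|_] /=; rewrite ?muln1 ?subnKC // muln0 ?subn0.
rewrite mulrCA rmorphM rmorphXn mulrC; apply: ideal_gen_mulr.
by exists (pi (mvar K n i)); split => //; apply: NNPP => /outside_qP; apply/negP.
Qed.

Section TraceMaps.
Variables (p e : nat) (l : K -> K).
Hypotheses (pK : p \in [pchar K]) (l_lin : frob_linear (p ^ e) l).
Local Notation Q := (p ^ e)%N.
Local Notation D := (@mtrace K p e l n).

(* Guarantees [x^w * I \subset I^[Q]], so that [F |-> D (x^w * F)] passes to [R]. *)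
Definition frob_compatible (w : 'I_n -> nat) := forall G, G \in T ->
  exists2 G', G' \in T & forall i, i \in G' -> (Q <= w i + set_exp G i)%N.

Lemma mtrace_monomialM_I w d H : frob_compatible w -> H \in (I : pred S) ->
  D (mconst n d * monomial K w * H) \in (I : pred S).
Proof.
move=> Hw /I_gen [k [r [g [Hg ->]]]].
rewrite mulr_sumr (mtrace_sum pK l_lin); apply: rpred_sum => j _.
have [G GT ->] := Hg j; have [G' G'T HG'] := Hw G GT.
have -> : mconst n d * monomial K w * (r j * sqfree_monomial K G) =
   monomial K (set_exp G') ^+ Q *
     (mconst n d * r j * monomial K (fun i => w i + set_exp G i - Q * set_exp G' i)%N).
  rewrite -monomialX sqfree_monomialE.
  have E : monomial K w * monomial K (set_exp G) =
      monomial K (fun i => Q * set_exp G' i)%N *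
      monomial K (fun i => w i + set_exp G i - Q * set_exp G' i)%N.
    rewrite -!monomialD; apply: eq_monomial => i; rewrite subnKC // /set_exp.
    by case: (boolP (i \in G')) => iG' /=; [rewrite muln1 HG' | rewrite muln0].
  transitivity (mconst n d * r j * (monomial K w * monomial K (set_exp G))).
    by ring.
  by rewrite E; ring.
rewrite (mtrace_frobM pK l_lin) mulrC; apply: idealMr.
by rewrite -sqfree_monomialE; exact: sqfree_monomial_in_I.
Qed.

Definition trace_map w d (x : R) : R := pi (D (mconst n d * monomial K w * repr x)).

Lemma trace_map_frob_linear w d : frob_compatible w -> frob_linear Q (trace_map w d).
Proof.
move=> Hw; rewrite /trace_map; set M := mconst n d * monomial K w; split => [x y|r x].
  rewrite -rmorphD; apply/piE.
  rewrite -(mtraceD pK l_lin) -(mtraceB pK l_lin) -mulrDr -mulrBr.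
  apply: mtrace_monomialM_I => //; apply/piE.
  by rewrite reprK rmorphD; congr (_ + _); exact/esym/reprK.
have -> : r * pi (D (M * repr x)) = pi (D (repr r ^+ Q * (M * repr x))).
  by rewrite (mtrace_frobM pK l_lin) rmorphM; congr (_ * _); exact/esym/reprK.
apply/eqP; rewrite -subr_eq0 -rmorphB -(mtraceB pK l_lin) mulrCA -mulrBr.
apply/eqP/pi_eq0/mtrace_monomialM_I => //.
apply/piE; rewrite reprK rmorphM rmorphXn.
by congr (_ ^+ _ * _); exact/esym/reprK.
Qed.

(* With [r := a + 1] on [outside_q] and [r := 0] elsewhere, this is the [w]
   with [Q * r + (Q - 1) - w = a], provided [a < Q] off [outside_q]. *)
Definition witness_weight (a : 'I_n -> nat) (i : 'I_n) : nat :=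
  if i \in outside_q then (Q * (a i).+1 + (Q - 1) - a i)%N else (Q - 1 - a i)%N.

Lemma frob_compatible_witness a :
  ~~ cartier_class a -> frob_compatible (witness_weight a).
Proof.
move=> nca G GT; have Q0 := expn_pchar_gt0 e pK.
have /forallPn [G'] : ~~ face ((G :\: supp a) :|: outside_q).
  apply: contra nca => ft; apply/existsP; exists ((G :\: supp a) :|: outside_q).
  rewrite ft subsetUr /=; apply/forallPn; exists G; rewrite GT /= negbK.
  by apply/subsetP => i iG; rewrite !inE iG /=; case: (a i != 0%N).
rewrite negb_imply negbK => /andP [G'T G't]; exists G' => // i iG'.
rewrite /witness_weight /set_exp; have := leq_pmull (a i).+1 Q0.
have := subsetP G't i iG'; rewrite !inE => /orP [/andP [/negPn/eqP ai iG]|iB].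
  by case: ifP => _; rewrite ?iG ai; lia.
by rewrite iB; lia.
Qed.

(* If [x^a] had a coefficient [c != 0] in [f], the trace map
   [trace_map (witness_weight a) (t / c)] would send [f] into [q] with
   coefficient [l t = 1] at an exponent supported on [outside_q]. *)
Lemma mcoef_J_e_residual a f t : l t = 1 -> J_e p e q f ->
  ~~ cartier_class a -> ~~ frob_class Q a -> mcoef (repr f) a = 0.
Proof.
move=> lt Jf nca nfa; apply: NNPP => Fa; have Q0 := expn_pchar_gt0 e pK.
have aQ i : i \notin outside_q -> (a i < Q)%N.
  move=> iB; rewrite ltnNge; apply: contra nfa => Qa.
  by apply/existsP; exists i; rewrite iB.
pose r i := if i \in outside_q then (a i).+1 else 0%N.
have rB : supp r \subset outside_q by apply/subsetP => i; rewrite inE /r; case: ifP.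
have := mcoef_q (Jf _ (trace_map_frob_linear (t / mcoef (repr f) a)
  (frob_compatible_witness nca))) rB.
rewrite (mcoef_mtrace pK l_lin) -mulrA (mulrC (monomial K _)) mcoef_constM.
rewrite mcoefM_monomial.
have -> : exp_le (witness_weight a) (fun i => Q * r i + (Q - 1))%N.
  apply/forallP => i; rewrite /witness_weight /r; case: ifP => iB.
    by set X := (Q * _)%N; lia.
  by rewrite muln0; lia.
have -> : (fun i => Q * r i + (Q - 1) - witness_weight a i)%N = a.
  apply: functional_extensionality => i; rewrite /witness_weight /r; case: ifP => iB.
    by have := leq_pmull (a i).+1 Q0; set X := (Q * _)%N; lia.
  by have := aQ i (negbT iB); rewrite muln0; lia.
by rewrite mulfVK ?lt; [move/eqP; rewrite oner_eq0 | apply/eqP].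
Qed.

End TraceMaps.

Lemma J_e_sub_ideal_sum p e f : prime p -> p \in [pchar K] -> F_finite K p ->
  J_e p e q f -> ideal_sum (frob_pow (p ^ e) q) (cartier_core p q) f.
Proof.
move=> p_pr pK Ff Jf; have [l l_lin [t lt]] := exists_frobX_functional e pK Ff.
set F := repr f; pose P a := ~~ cartier_class a && frob_class (p ^ e) a.
have EF : F = mrestr P F + mrestr cartier_class F.
  apply: mcoef_inj => a; rewrite mcoefD !mcoef_mrestr /P.
  case: (boolP (cartier_class a)) => ca /=; first by rewrite add0r.
  case: (boolP (frob_class _ a)) => fa; first by rewrite addr0.
  by rewrite addr0 (mcoef_J_e_residual pK l_lin lt Jf ca fa).
exists (pi (mrestr P F)), (pi (mrestr cartier_class F)); split.
- apply: (@mrestr_ind _ _ (fun G => frob_pow (p ^ e) q (pi G))) => [|x y|a c /andP [_]].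
  + by rewrite rmorph0; exact: ideal_gen0.
  + by rewrite rmorphD; exact: ideal_genD.
  exact: frob_class_frob_pow.
- apply: (@mrestr_ind _ _ (fun G => cartier_core p q (pi G))) => [|x y|a c].
  + by rewrite rmorph0; exact: cartier_core0 q_ideal.
  + by move=> Hx Hy; rewrite rmorphD; exact: (cartier_coreD q_ideal Hx Hy).
  exact: cartier_class_cartier_core.
- by rewrite -rmorphD -EF; exact/esym/reprK.
Qed.

End StanleyReisner.

Theorem mainTheorem11 (p : nat) (K : fieldType) (n : nat)
    (I : idealr (mpoly K n))
    (q : {ideal_quot I} -> Prop) :
  prime p -> p \in [pchar K] -> F_finite K p ->
  is_sqfree_monomial_ideal (I : pred (mpoly K n)) ->
  is_prime_ideal q ->
  is_monomial_ideal (fun f : mpoly K n => (\pi_({ideal_quot I}) f)%qT) q ->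
  forall e : nat,
    ideal_eq (J_e p e q) (ideal_sum (frob_pow (p ^ e) q) (cartier_core p q)).
Proof.
move=> p_pr pK Ff [T I_gen] q_prime q_monomial e f; split.
  exact: J_e_sub_ideal_sum.
by apply: ideal_sum_sub_J_e; case: q_prime.
Qed.
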